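(* Let $A$ and $B$ be differential rings and $\nu\colon A\to B$ a differential homomorphism. Suppose $B$ is differentially generated over $\nu(A)$ by finitely many elements $\eta_1,\ldots,\eta_m$, and that for each generator $\eta_j$ there exist $b_1,\ldots,b_n\in A$ (depending on $j$) such that $\nu(b_k)\eta_j\in\nu(A)$ for all $k$ and $\{b_1,\ldots,b_n\}=A$. Then the contraction map $\nu^*\colon\operatorname{Spec}^\Delta B\to V(\ker\nu)$, $\mathfrak q\mapsto \nu^{-1}(\mathfrak q)$, is a homeomorphism, where $V(\ker\nu)\subseteq\operatorname{Spec}^\Delta A$ carries the subspace topology.
   Context: All rings are commutative with unit; homomorphisms preserve the unit. A differential ring is a ring equipped with finitely many pairwise commuting derivations; a differential homomorphism is a ring homomorphism commuting with the derivations. $B$ is differentially generated over $\nu(A)$ by $\eta_1,\dots,\eta_m$ if $B$ is the smallest differential subring of $B$ containing $\nu(A)$ and $\eta_1,\dots,\eta_m$. For a differential ring $A$, $\operatorname{Spec}^\Delta A$ is the set of prime ideals of $A$ closed under all the derivations (prime differential ideals); for $E\subseteq A$, $V(E)$ is the set of prime differential ideals containing $E$, and the sets $V(E)$ are the closed sets of the Kolchin topology on $\operatorname{Spec}^\Delta A$. For $E\subseteq A$, $\{E\}$ denotes the smallest radical differential ideal of $A$ containing $E$. *)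

From HB Require Import structures.
From mathcomp Require Import all_boot all_order all_algebra.
Set Implicit Arguments. Unset Strict Implicit. Unset Printing Implicit Defensive.
Import GRing.Theory.
Local Open Scope ring_scope.

Definition is_derivation (R : comPzRingType) (D : R -> R) : Prop :=
  (forall x y : R, D (x + y) = D x + D y) /\
  (forall x y : R, D (x * y) = D x * y + x * D y).

Definition is_diff_ring (R : comPzRingType) (d : nat) (D : 'I_d -> R -> R) : Prop :=
  (forall i, is_derivation (D i)) /\
  (forall i j (x : R), D i (D j x) = D j (D i x)).

(* differential homomorphism (the ring homomorphism part is given by
   {rmorphism A -> B}) *)
Definition commutes_with_ders (A B : comPzRingType) (d : nat)
  (DA : 'I_d -> A -> A) (DB : 'I_d -> B -> B) (nu : A -> B) : Prop :=
  forall i (a : A), nu (DA i a) = DB i (nu a).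

Definition is_ideal (R : comPzRingType) (I : R -> Prop) : Prop :=
  [/\ I 0, (forall x y, I x -> I y -> I (x + y)) & (forall r x, I x -> I (r * x))].

Definition is_diff_closed (R : comPzRingType) (d : nat) (D : 'I_d -> R -> R)
  (I : R -> Prop) : Prop := forall i x, I x -> I (D i x).

Definition is_prime_diff_ideal (R : comPzRingType) (d : nat) (D : 'I_d -> R -> R)
  (I : R -> Prop) : Prop :=
  [/\ is_ideal I, is_diff_closed D I, ~ I 1 &
      (forall x y, I (x * y) -> I x \/ I y)].

Definition is_radical_diff_ideal (R : comPzRingType) (d : nat) (D : 'I_d -> R -> R)
  (I : R -> Prop) : Prop :=
  [/\ is_ideal I, is_diff_closed D I & (forall x n, I (x ^+ n.+1) -> I x)].

(* {E} : the smallest radical differential ideal containing E. *)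
Definition rad_diff_ideal_gen (R : comPzRingType) (d : nat) (D : 'I_d -> R -> R)
  (E : R -> Prop) : R -> Prop :=
  fun x => forall I, is_radical_diff_ideal D I -> (forall e, E e -> I e) -> I x.

Definition is_diff_subring (R : comPzRingType) (d : nat) (D : 'I_d -> R -> R)
  (S : R -> Prop) : Prop :=
  [/\ S 1, (forall x y, S x -> S y -> S (x - y)),
      (forall x y, S x -> S y -> S (x * y)) & is_diff_closed D S].

Definition diff_generated (A B : comPzRingType) (d : nat) (DB : 'I_d -> B -> B)
  (nu : A -> B) (m : nat) (eta : 'I_m -> B) : Prop :=
  forall S : B -> Prop, is_diff_subring DB S ->
    (forall a, S (nu a)) -> (forall j, S (eta j)) -> forall b, S b.

Definition SpecD (R : comPzRingType) (d : nat) (D : 'I_d -> R -> R) : Type :=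
  { P : R -> Prop | is_prime_diff_ideal D P }.

Definition kolchin_closed (R : comPzRingType) (d : nat) (D : 'I_d -> R -> R)
  (C : SpecD D -> Prop) : Prop :=
  exists E : R -> Prop, forall P : SpecD D, C P <-> (forall e, E e -> proj1_sig P e).

Definition VD (R : comPzRingType) (d : nat) (D : 'I_d -> R -> R) (K : R -> Prop)
  : Type := { P : SpecD D | forall e, K e -> proj1_sig P e }.

Definition VD_closed (R : comPzRingType) (d : nat) (D : 'I_d -> R -> R)
  (K : R -> Prop) (C : VD D K -> Prop) : Prop :=
  exists C' : SpecD D -> Prop, kolchin_closed C' /\
    forall P : VD D K, C P <-> C' (proj1_sig P).

Definition continuous_cl (X Y : Type) (clX : (X -> Prop) -> Prop)
  (clY : (Y -> Prop) -> Prop) (f : X -> Y) : Prop :=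
  forall C : Y -> Prop, clY C -> clX (fun x => C (f x)).

Definition homeomorphism (X Y : Type) (clX : (X -> Prop) -> Prop)
  (clY : (Y -> Prop) -> Prop) (f : X -> Y) : Prop :=
  exists g : Y -> X, [/\ cancel f g, cancel g f,
    continuous_cl clX clY f & continuous_cl clY clX g].

(* The proof is a localization argument that never forms a localized ring.
   Say that x in B has a denominator outside a prime differential ideal p of A
   if nu s * x = nu a for some s outside p.  Such elements form a differential
   subring of B (quotient rule for derivations), and every generator eta_j has
   one: some b_k lies outside p, since otherwise the radical differential ideal
   p would contain {b_1, ..., b_n} = A.  Hence EVERY x in B has a denominator
   outside every prime differential ideal p of A.

   With this, the extension p^e = {x | nu s * x = nu a, s outside p, a in p}
   of a prime differential ideal p containing ker nu is a prime differential
   ideal of B whose contraction is p, and the extension of the contraction of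
   a prime q of B is q again.  So contraction and extension are mutually
   inverse; both are continuous since the preimage of V(E) under contraction
   is V(nu(E)) and the preimage of V(F) under extension is V(E') where E'
   collects the numerators of the elements of F. *)

From HB Require Import structures.
From mathcomp Require Import all_boot all_order all_algebra ring.
From Stdlib Require Import Classical FunctionalExtensionality
  PropExtensionality ProofIrrelevance.
Import GRing.Theory.
Local Open Scope ring_scope.
Set Implicit Arguments. Unset Strict Implicit.

Lemma pred_sig_ext (T : Type) (P : (T -> Prop) -> Prop) (x y : {f | P f}) :
  (forall t, proj1_sig x t <-> proj1_sig y t) -> x = y.
Proof.
case: x y => [f hf] [g hg] /= fg.
have fg' : f = g.
  by apply: functional_extensionality => t; apply: propositional_extensionality.
by subst; rewrite (proof_irrelevance _ hf hg).
Qed.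

Lemma sig_proj1_inj (T : Type) (P : T -> Prop) (x y : {t | P t}) :
  proj1_sig x = proj1_sig y -> x = y.
Proof. by case: x y => [f hf] [g hg] /= fg; subst; rewrite (proof_irrelevance _ hf hg). Qed.

Lemma idealB (R : comPzRingType) (I : R -> Prop) :
  is_ideal I -> forall x y, I x -> I y -> I (x - y).
Proof. by case=> _ ID IM x y Ix Iy; apply: ID => //; rewrite -mulN1r; apply: IM. Qed.

Section PrimeDiffIdeals.
Variables (R : comPzRingType) (d : nat) (D : 'I_d -> R -> R) (p : R -> Prop).
Hypothesis hp : is_prime_diff_ideal D p.

Lemma prime_diff_ideal_radical : is_radical_diff_ideal D p.
Proof.
case: (hp) => pI pd _ pprime; split => // x; elim=> [|n IHn]; first by rewrite expr1.
by rewrite exprS => /pprime [] // /IHn.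
Qed.

Lemma unit_gen_not_in_prime (E : R -> Prop) :
  (forall x, rad_diff_ideal_gen D E x) -> exists2 e, E e & ~ p e.
Proof.
move=> genE; case: (hp) => _ _ p1 _.
apply: NNPP => noE; apply: p1; apply: (genE 1 p prime_diff_ideal_radical) => e Ee.
by apply: NNPP => pe; apply: noE; exists e.
Qed.

End PrimeDiffIdeals.

Lemma derivation_quotient (R : comPzRingType) (D : R -> R) :
  is_derivation D -> forall s x, s * s * D x = s * D (s * x) - D s * (s * x).
Proof. by case=> _ DM s x; rewrite DM; ring. Qed.

Section Contraction.
Variables (A B : comPzRingType) (d : nat).
Variables (DA : 'I_d -> A -> A) (DB : 'I_d -> B -> B).
Variable nu : {rmorphism A -> B}.
Hypothesis hnu : commutes_with_ders DA DB nu.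

Lemma contraction_prime (q : B -> Prop) :
  is_prime_diff_ideal DB q -> is_prime_diff_ideal DA (fun a => q (nu a)).
Proof.
case=> [[q0 qD qM]] qd q1 qprime; split.
- split=> [|x y|r x]; rewrite ?rmorph0 ?rmorphD ?rmorphM //; [exact: qD | exact: qM].
- by move=> i x qx; rewrite hnu; apply: qd.
- by rewrite rmorph1.
- by move=> x y; rewrite rmorphM => /qprime.
Qed.

Lemma contraction_contains_ker (q : SpecD DB) a : nu a = 0 -> proj1_sig q (nu a).
Proof. by case: q => q [[q0 _ _] _ _ _] /= ->. Qed.

Definition contraction (q : SpecD DB) : VD DA (fun a => nu a = 0) :=
  exist _ (exist _ (fun a => proj1_sig q (nu a)) (contraction_prime (proj2_sig q)))
    (@contraction_contains_ker q).

(* The preimage of V(E) under contraction is V(nu(E)). *)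
Lemma contraction_continuous :
  continuous_cl (@kolchin_closed B d DB) (@VD_closed A d DA (fun a => nu a = 0))
    contraction.
Proof.
move=> C [C' [[E hE] hC]].
exists (fun y => exists2 e, E e & y = nu e) => q.
rewrite hC hE /=; split=> [qE _ [e Ee ->]|qE e Ee]; first exact: qE.
by apply: qE; exists e.
Qed.

Lemma fibre_closed (p : A -> Prop) : is_ideal p ->
  (forall a, nu a = 0 -> p a) -> forall x y, nu x = nu y -> p y -> p x.
Proof.
move=> pI pker x y nuxy py.
have pxy : p (x - y) by apply: pker; rewrite rmorphB nuxy subrr.
by rewrite -(subrK y x); case: pI => _ pD _; apply: pD.
Qed.

Definition denominator_outside (p : A -> Prop) (x : B) : Prop :=
  exists s a, ~ p s /\ nu s * x = nu a.

(* The extension of p to B, i.e. the ideal of fractions a / s with a in p and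
   s outside p that land in B. *)
Definition extension (p : A -> Prop) (x : B) : Prop :=
  exists s a, [/\ ~ p s, p a & nu s * x = nu a].

Hypothesis hB : is_diff_ring DB.

(* The quotient rule transported along nu: derivatives of fractions are
   fractions with squared denominator. *)
Lemma derivative_fraction i s x a :
  nu s * x = nu a -> nu (s * s) * DB i x = nu (s * DA i a - DA i s * a).
Proof.
move=> sxa; rewrite rmorphM derivation_quotient ?sxa; last exact: hB.1 i.
by rewrite rmorphB !rmorphM !hnu.
Qed.

Lemma denominator_outside_subring (p : A -> Prop) :
  is_prime_diff_ideal DA p -> is_diff_subring DB (denominator_outside p).
Proof.
case=> _ _ p1 pprime; split.
- by exists 1, 1; rewrite rmorph1 mulr1.
- move=> x y [s [a [ps sxa]]] [t [b [pt tyb]]].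
  exists (s * t), (t * a - s * b); split; first by case/pprime.
  by rewrite rmorphB !rmorphM -sxa -tyb; ring.
- move=> x y [s [a [ps sxa]]] [t [b [pt tyb]]].
  exists (s * t), (a * b); split; first by case/pprime.
  by rewrite !rmorphM -sxa -tyb; ring.
- move=> i x [s [a [ps sxa]]].
  exists (s * s), (s * DA i a - DA i s * a); split; first by case/pprime.
  exact: derivative_fraction.
Qed.

Section ExtensionPrime.
Variables (p : A -> Prop) (hp : is_prime_diff_ideal DA p).
Hypotheses (pker : forall a, nu a = 0 -> p a)
           (denom : forall x, denominator_outside p x).

Lemma extension_contraction a : extension p (nu a) <-> p a.
Proof.
case: (hp) => pI _ p1 pprime; split=> [[s [c [ps pc sac]]]|pa].
  have : p (s * a) by apply: (fibre_closed pI pker (y := c)); rewrite ?rmorphM.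
  by case/pprime.
by exists 1, a; rewrite rmorph1 mul1r.
Qed.

Lemma extension_prime : is_prime_diff_ideal DB (extension p).
Proof.
case: (hp) => pI pd p1 pprime; case: (pI) => p0 pD pM; split.
- split.
  + by exists 1, 0; rewrite mulr0 rmorph0.
  + move=> x y [s [a [ps pa sxa]]] [t [b [pt pb tyb]]].
    exists (s * t), (t * a + s * b); split; first by case/pprime.
      by apply: pD; apply: pM.
    by rewrite rmorphD !rmorphM -sxa -tyb; ring.
  + move=> r x [s [a [ps pa sxa]]].
    have [t [c [pt trc]]] := denom r.
    exists (t * s), (c * a); split; [by case/pprime | exact: pM |].
    by rewrite !rmorphM -trc -sxa; ring.
- move=> i x [s [a [ps pa sxa]]].
  exists (s * s), (s * DA i a - DA i s * a); split; first by case/pprime.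
    by apply: (idealB pI); apply: pM => //; apply: pd.
  exact: derivative_fraction.
- case=> s [a [ps pa s1a]]; apply: ps (fibre_closed pI pker _ pa).
  by rewrite -s1a mulr1.
- move=> x y [s [a [ps pa sxya]]].
  have [t [c [pt txc]]] := denom x.
  have [u [e [pu uye]]] := denom y.
  have : p (s * (c * e)).
    apply: (fibre_closed pI pker (y := t * u * a)); last exact: pM.
    by rewrite !rmorphM -txc -uye -sxya; ring.
  case/pprime=> // /pprime [pc|pe]; [left; exists t, c | right; exists u, e]; by [].
Qed.

End ExtensionPrime.

Lemma extension_of_contraction (q : B -> Prop) :
  is_prime_diff_ideal DB q ->
  (forall x, denominator_outside (fun a => q (nu a)) x) ->
  forall x, extension (fun a => q (nu a)) x <-> q x.
Proof.
move=> hq denom x; case: (hq) => [[_ _ qM]] _ _ qprime.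
split=> [[s [a [qs qa sxa]]]|qx]; first by move: qa; rewrite -sxa => /qprime [].
have [s [a [qs sxa]]] := denom x.
by exists s, a; split => //; rewrite -sxa; apply: qM.
Qed.

Variables (m : nat) (eta : 'I_m -> B).
Hypothesis hgen : diff_generated DB nu eta.
Hypothesis hb : forall j : 'I_m, exists (n : nat) (b : 'I_n -> A),
  (forall k, exists a : A, nu (b k) * eta j = nu a) /\
  (forall x : A, rad_diff_ideal_gen DA (fun y => exists k, y = b k) x).

Lemma all_denominators (p : A -> Prop) :
  is_prime_diff_ideal DA p -> forall x, denominator_outside p x.
Proof.
move=> hp; apply: hgen; first exact: denominator_outside_subring.
  by move=> a; exists 1, a; rewrite rmorph1 mul1r; case: hp.
move=> j; have [n [b [bfrac bgen]]] := hb j.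
have [_ [k ->] pbk] := unit_gen_not_in_prime hp bgen.
by have [a bka] := bfrac k; exists (b k), a.
Qed.

Definition extension_point (P : VD DA (fun a => nu a = 0)) : SpecD DB :=
  let: exist (exist p hp) pker := P in
  exist _ (extension p) (extension_prime hp pker (all_denominators hp)).

Lemma contractionK : cancel contraction extension_point.
Proof.
move=> q; apply: pred_sig_ext => x /=.
have hq := proj2_sig q.
exact/(extension_of_contraction hq)/all_denominators/contraction_prime.
Qed.

Lemma extension_pointK : cancel extension_point contraction.
Proof.
move=> [[p hp] pker]; apply/sig_proj1_inj/pred_sig_ext => a /=.
exact: (extension_contraction hp pker).
Qed.

(* The preimage of V(F) under extension is V(E'), where E' consists of the
   numerators a of the relations nu s * f = nu a with f in F. *)
Lemma extension_continuous :
  continuous_cl (@VD_closed A d DA (fun a => nu a = 0)) (@kolchin_closed B d DB)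
    extension_point.
Proof.
move=> C [F hF].
pose E' a := exists f s, F f /\ nu s * f = nu a.
exists (fun P : SpecD DA => forall a, E' a -> proj1_sig P a).
split; first by exists E'.
move=> [[p hp] pker] /=; rewrite hF /=.
have [[_ _ pextM] _ _ _] := extension_prime hp pker (all_denominators hp).
split=> [Fext a [f [s [Ff sfa]]]|E'p f Ff].
  by apply/(extension_contraction hp pker); rewrite -sfa; apply/pextM/Fext.
have [s [a [ps sfa]]] := all_denominators hp f.
by exists s, a; split => //; apply: E'p; exists f, s.
Qed.

End Contraction.

Theorem lemma2p3 (A B : comPzRingType) (d : nat)
  (DA : 'I_d -> A -> A) (DB : 'I_d -> B -> B)
  (hA : is_diff_ring DA) (hB : is_diff_ring DB)
  (nu : {rmorphism A -> B}) (hnu : commutes_with_ders DA DB nu)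
  (m : nat) (eta : 'I_m -> B)
  (hgen : diff_generated DB nu eta)
  (hb : forall j : 'I_m, exists (n : nat) (b : 'I_n -> A),
      (forall k, exists a : A, nu (b k) * eta j = nu a) /\
      (forall x : A, rad_diff_ideal_gen DA (fun y => exists k, y = b k) x)) :
  exists h : SpecD DB -> VD DA (fun a => nu a = 0),
    (forall (q : SpecD DB) (a : A),
        proj1_sig (proj1_sig (h q)) a <-> proj1_sig q (nu a)) /\
    homeomorphism (@kolchin_closed B d DB)
                  (@VD_closed A d DA (fun a => nu a = 0)) h.
Proof.
exists (contraction hnu); split=> //.
exists (extension_point hnu hB hgen hb); split.
- exact: contractionK.
- exact: extension_pointK.
- exact: contraction_continuous.
- exact: extension_continuous.
Qed.
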